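(* Let $\lambda>0$ and consider the $(1+1)$-dimensional Chaplygin gas system for a density $\rho(t,x)>0$ and a momentum $p(t,x)$, $(t,x)\in\mathbb{R}^2$: $$\frac{\partial\rho}{\partial t}=-\frac{\partial}{\partial x}(p\rho),\qquad \frac{\partial p}{\partial t}=-\frac{\partial}{\partial x}\left(\frac{p^2}{2}-\frac{\lambda}{\rho^2}\right),$$ restricted to states satisfying the constraint $p\rho=\sqrt{2\lambda}$. Assume that the densities $\rho$ under consideration satisfy $0<\alpha:=\inf_{(t,x)\in\mathbb{R}^2}\rho(t,x)$ and $\beta:=\sup_{(t,x)\in\mathbb{R}^2}\rho(t,x)<\infty$. Then the constant state $(p_e,\rho_e)=\left(\sqrt[3]{2},\ \frac{\sqrt{2\lambda}}{\sqrt[3]{2}}\right)$ is a Lyapunov-stable equilibrium point of this system on the constraint set $p\rho=\sqrt{2\lambda}$, where stability is measured in the norm $$\|\Delta u\|^2=\int_{\mathbb{R}}\frac{\sqrt{2\lambda}}{\rho_e\beta}\left(\frac{1}{\rho_e}+\frac{1}{\beta}\right)(\Delta\rho)^2\,\mathrm{d}x,\qquad \Delta u=(p-p_e,\rho-\rho_e),\ \Delta\rho=\rho-\rho_e.$$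
   Context: An equilibrium point $u_e$ of an evolution equation $\partial_t u=X(u)$ is a state with $X(u_e)=0$. It is Lyapunov stable with respect to a norm $\|\cdot\|$ if for every $\varepsilon>0$ there is $\sigma>0$ such that every solution $u(t,\cdot)$ with $\|u(t_0,\cdot)-u_e\|<\sigma$ satisfies $\|u(t,\cdot)-u_e\|<\varepsilon$ for all $t\ge t_0$. The system is Hamiltonian with Hamiltonian $H=\int(\frac12\rho p^2+\frac{\lambda}{\rho})\,\mathrm{d}x$ and Poisson bracket $\{F,G\}=-\int\left(\frac{\delta F}{\delta\rho}\partial_x\frac{\delta G}{\delta p}+\frac{\delta F}{\delta p}\partial_x\frac{\delta G}{\delta\rho}\right)\mathrm{d}x$. *)

From HB Require Import structures.
From mathcomp Require Import all_boot all_order all_algebra.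
From mathcomp Require Import all_classical all_reals all_analysis.
Set Implicit Arguments. Unset Strict Implicit. Unset Printing Implicit Defensive.
Import Order.TTheory GRing.Theory Num.Theory.
Import numFieldNormedType.Exports.
Local Open Scope classical_set_scope.
Local Open Scope ring_scope.

Section Chaplygin.
Variable R : realType.

Definition dt (f : R -> R -> R) (t x : R) : R := derive1 (fun s => f s x) t.
Definition dx (f : R -> R -> R) (t x : R) : R := derive1 (fun y => f t y) x.

Definition rho_flux (rho p : R -> R -> R) : R -> R -> R :=
  fun t x => p t x * rho t x.
Definition p_flux (lambda : R) (rho p : R -> R -> R) : R -> R -> R :=
  fun t x => p t x ^+ 2 / 2 - lambda / rho t x ^+ 2.

Definition chaplygin_solution (lambda : R) (rho p : R -> R -> R) : Prop :=
  forall t x,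
    0 < rho t x /\
    derivable (fun s => rho s x) t 1 /\
    derivable (fun s => p s x) t 1 /\
    derivable (fun y => rho_flux rho p t y) x 1 /\
    derivable (fun y => p_flux lambda rho p t y) x 1 /\
    dt rho t x = - dx (rho_flux rho p) t x /\
    dt p t x = - dx (p_flux lambda rho p) t x.

Definition on_constraint (lambda : R) (rho p : R -> R -> R) : Prop :=
  forall t x, p t x * rho t x = Num.sqrt (2 * lambda).

Definition p_e : R := 2 `^ (3^-1).
Definition rho_e (lambda : R) : R := Num.sqrt (2 * lambda) / p_e.

Definition dnorm2 (lambda beta : R) (rho : R -> R -> R) (t : R) : \bar R :=
  (\int[@lebesgue_measure R]_(x in setT)
     ((Num.sqrt (2 * lambda) / (rho_e lambda * beta)
        * ((rho_e lambda)^-1 + beta^-1) * (rho t x - rho_e lambda) ^+ 2)%:E))%E.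

End Chaplygin.

(* On the constraint set the density flux [p rho] is the constant
   [sqrt (2 lambda)], so the continuity equation gives [rho_t = 0]: the density
   of a constrained solution does not depend on time.  The norm only involves
   the density, hence it is conserved along such solutions and [sigma = eps]
   witnesses Lyapunov stability. *)

From HB Require Import structures.
From mathcomp Require Import all_boot all_order all_algebra.
From mathcomp Require Import all_classical all_reals all_analysis.
Import Order.TTheory GRing.Theory Num.Theory.
Import numFieldNormedType.Exports.
Local Open Scope classical_set_scope.
Local Open Scope ring_scope.

Section ChaplyginStability.
Variable R : realType.

Lemma p_e_gt0 : 0 < p_e R.
Proof. exact: powR_gt0. Qed.

Lemma p_e_mul_rho_e (lambda : R) : p_e R * rho_e lambda = Num.sqrt (2 * lambda).
Proof. by rewrite /rho_e mulrC -mulrA mulVf ?mulr1 // gt_eqF // p_e_gt0. Qed.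

Lemma rho_e_gt0 (lambda : R) : 0 < lambda -> 0 < rho_e lambda.
Proof. by move=> lambda_gt0; rewrite divr_gt0 ?p_e_gt0 // sqrtr_gt0 mulr_gt0. Qed.

Lemma chaplygin_solution_cst (lambda r q : R) :
  0 < r -> chaplygin_solution lambda (fun _ _ => r) (fun _ _ => q).
Proof.
move=> r_gt0 t x; split=> //.
do 4! (split; first exact: derivable_cst).
by rewrite /dt /dx /rho_flux /p_flux !derive1_cst oppr0.
Qed.

Lemma dt_rho_on_constraint {lambda : R} {rho p : R -> R -> R} t x :
  chaplygin_solution lambda rho p -> on_constraint lambda rho p ->
  dt rho t x = 0.
Proof.
move=> sol_rho_p constraint; have [_ [_ [_ [_ [_ [-> _]]]]]] := sol_rho_p t x.
rewrite /dx.
have -> : (fun y => rho_flux rho p t y) = cst (Num.sqrt (2 * lambda)).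
  by apply/funext => y; rewrite /rho_flux constraint.
by rewrite derive1_cst oppr0.
Qed.

Lemma rho_time_invariant {lambda : R} {rho p : R -> R -> R} t t0 x :
  chaplygin_solution lambda rho p -> on_constraint lambda rho p ->
  rho t x = rho t0 x.
Proof.
move=> sol_rho_p constraint.
apply: (@is_derive_0_is_cst _ (fun s => rho s x)) => s.
have [_ [derivable_rho _]] := sol_rho_p s x.
have := derivableP derivable_rho.
by rewrite -derive1E -/(dt rho s x) (dt_rho_on_constraint _ _ sol_rho_p constraint).
Qed.

Lemma dnorm2_time_invariant {lambda : R} beta {rho p : R -> R -> R} t t0 :
  chaplygin_solution lambda rho p -> on_constraint lambda rho p ->
  dnorm2 lambda beta rho t = dnorm2 lambda beta rho t0.
Proof.
move=> sol_rho_p constraint; rewrite /dnorm2; congr (integral _ _ _).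
by apply/funext => x; rewrite (rho_time_invariant _ t0 _ sol_rho_p constraint).
Qed.

End ChaplyginStability.

Theorem mainTheorem1 (R : realType) (lambda : R) (hlambda : 0 < lambda) :
  (* (p_e, rho_e) lies on the constraint set and is an equilibrium point *)
  p_e R * rho_e lambda = Num.sqrt (2 * lambda) /\
  chaplygin_solution lambda (fun _ _ => rho_e lambda) (fun _ _ => p_e R) /\
  (* Lyapunov stability on the constraint set, in the norm ||.|| *)
  (forall eps : R, 0 < eps -> exists2 sigma : R, 0 < sigma &
     forall (rho p : R -> R -> R) (alpha beta t0 : R),
       chaplygin_solution lambda rho p ->
       on_constraint lambda rho p ->
       (* alpha = inf rho > 0 *)
       0 < alpha ->
       (forall t x, alpha <= rho t x) ->
       (forall a, (forall t x, a <= rho t x) -> a <= alpha) ->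
       (* beta = sup rho < oo *)
       (forall t x, rho t x <= beta) ->
       (forall b, (forall t x, rho t x <= b) -> beta <= b) ->
       (dnorm2 lambda beta rho t0 < (sigma ^+ 2)%:E)%E ->
       forall t, t0 <= t -> (dnorm2 lambda beta rho t < (eps ^+ 2)%:E)%E).
Proof.
split; first exact: p_e_mul_rho_e.
split; first exact/chaplygin_solution_cst/rho_e_gt0.
move=> eps eps_gt0; exists eps => // rho p alpha beta t0 sol_rho_p constraint.
move=> _ _ _ _ _ small_at_t0 t _.
by rewrite (dnorm2_time_invariant _ _ _ t0 sol_rho_p constraint).
Qed.
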